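(* Let $X$ be a quandle, let $O(X)$ be the set of orbits of the action of $\mathrm{As}(X)$ on $X$, and for $i\in O(X)$ let $\varepsilon_i:\mathrm{As}(X)\to\mathbb{Z}$ be the homomorphism with $\varepsilon_i(e_x)=1$ if $x$ lies in the orbit $i$ and $\varepsilon_i(e_x)=0$ otherwise. If $\mathrm{Inn}(X)$ is perfect, then $\mathrm{As}(X)\cong \mathrm{Ker}(\oplus_{i\in O(X)}\varepsilon_i)\times\mathbb{Z}^{\oplus O(X)}$, and $\mathrm{Ker}(\oplus_{i\in O(X)}\varepsilon_i)$ is a perfect group which is a central extension of $\mathrm{Inn}(X)$. In particular, if $X$ is connected, $\mathrm{Inn}(X)$ is perfect and $H_2^{\mathrm{gr}}(\mathrm{Inn}(X))=0$, then $\mathrm{As}(X)\cong\mathrm{Inn}(X)\times\mathbb{Z}$.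
   Context: A quandle is a set $X$ with a binary operation $\lhd$ such that $a\lhd a=a$ for all $a$, each map $x\mapsto x\lhd a$ is a bijection of $X$, and $(a\lhd b)\lhd c=(a\lhd c)\lhd(b\lhd c)$ for all $a,b,c$. The adjoint group $\mathrm{As}(X)$ is the group with generators $e_x$ ($x\in X$) and relations $e_{x\lhd y}=e_y^{-1}e_xe_y$. It acts on $X$ from the right by $x\cdot e_y=x\lhd y$; $X$ is connected if this action is transitive. Let $\psi_X:\mathrm{As}(X)\to\mathfrak S_X$ be the corresponding homomorphism and $\mathrm{Inn}(X)=\mathrm{Im}(\psi_X)$. $H_n^{\mathrm{gr}}$ is group homology with trivial $\mathbb{Z}$ coefficients. *)

From Stdlib Require Import ZArith List ClassicalEpsilon FunctionalExtensionality
  ProofIrrelevance PropExtensionality Lia.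
Import ListNotations.
Set Implicit Arguments.
Unset Strict Implicit.

Record grp := Grp {
  gcar :> Type;
  gmul : gcar -> gcar -> gcar;
  gone : gcar;
  ginv : gcar -> gcar;
  gmulA : forall a b c, gmul a (gmul b c) = gmul (gmul a b) c;
  gmul1l : forall a, gmul gone a = a;
  gmul1r : forall a, gmul a gone = a;
  gmulVl : forall a, gmul (ginv a) a = gone;
  gmulVr : forall a, gmul a (ginv a) = gone }.
Arguments gmul {g} _ _.
Arguments gone {g}.
Arguments ginv {g} _.

Definition is_hom (G H : grp) (f : G -> H) : Prop :=
  forall a b, f (gmul a b) = gmul (f a) (f b).
Definition is_bij (S T : Type) (f : S -> T) : Prop :=
  exists g : T -> S, (forall x, g (f x) = x) /\ (forall y, f (g y) = y).
Definition is_iso (G H : grp) (f : G -> H) : Prop := is_hom f /\ is_bij f.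
Definition isomorphic (G H : grp) : Prop := exists f : G -> H, is_iso f.

Lemma sig_eq (T : Type) (P : T -> Prop) (x y : {t : T | P t}) :
  proj1_sig x = proj1_sig y -> x = y.
Proof.
  destruct x as [x px], y as [y py]; simpl; intros ->.
  f_equal; apply proof_irrelevance.
Qed.

(* Subgroups.  [Sub G P] is the group carried by {g | P g} whenever P is a
   subgroup (the carrier is {g | is_subgroup P -> P g}, which is exactly
   {g | P g} in that case; the guard only makes the construction total). *)
Definition is_subgroup (G : grp) (P : G -> Prop) : Prop :=
  P gone /\ (forall a b, P a -> P b -> P (gmul a b)) /\ (forall a, P a -> P (ginv a)).

Section Sub.
Variables (G : grp) (P : G -> Prop).
Definition subcar := {g : G | is_subgroup P -> P g}.
Definition sub_mul (a b : subcar) : subcar :=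
  exist (fun g => is_subgroup P -> P g) (gmul (proj1_sig a) (proj1_sig b))
    (fun S => proj1 (proj2 S) _ _ (proj2_sig a S) (proj2_sig b S)).
Definition sub_one : subcar := exist (fun g => is_subgroup P -> P g) gone (fun S => proj1 S).
Definition sub_inv (a : subcar) : subcar :=
  exist (fun g => is_subgroup P -> P g) (ginv (proj1_sig a)) (fun S => proj2 (proj2 S) _ (proj2_sig a S)).
Definition Sub : grp.
Proof.
  refine (@Grp subcar sub_mul sub_one sub_inv _ _ _ _ _);
    intros; apply sig_eq; simpl;
    [apply gmulA | apply gmul1l | apply gmul1r | apply gmulVl | apply gmulVr].
Defined.
End Sub.

Definition prodgrp (G H : grp) : grp.
Proof.
  refine (@Grp (G * H) (fun a b => (gmul (fst a) (fst b), gmul (snd a) (snd b)))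
            (gone, gone) (fun a => (ginv (fst a), ginv (snd a))) _ _ _ _ _);
  intros; simpl;
  [rewrite !gmulA | rewrite !gmul1l | rewrite !gmul1r | rewrite !gmulVl | rewrite !gmulVr];
  destruct a; reflexivity.
Defined.

Definition Zgrp : grp :=
  @Grp Z Z.add 0%Z Z.opp Z.add_assoc Z.add_0_l Z.add_0_r Z.add_opp_diag_l Z.add_opp_diag_r.

Section Dsum.
Variable I : Type.
Definition dcar := {f : I -> Z | exists l : list I, forall i, f i <> 0%Z -> In i l}.
Definition d_add (a b : dcar) : dcar.
Proof.
  exists (fun i => proj1_sig a i + proj1_sig b i)%Z.
  destruct (proj2_sig a) as [la Ha], (proj2_sig b) as [lb Hb].
  exists (la ++ lb); intros i Hi; apply in_or_app.
  destruct (Z.eq_dec (proj1_sig a i) 0) as [E|E]; [right; apply Hb; lia | left; auto].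
Defined.
Definition d_zero : dcar.
Proof. exists (fun _ => 0%Z); exists nil; intros i H; congruence. Defined.
Definition d_opp (a : dcar) : dcar.
Proof.
  exists (fun i => - proj1_sig a i)%Z.
  destruct (proj2_sig a) as [la Ha]; exists la; intros i Hi; apply Ha; lia.
Defined.
Definition Zsum : grp.
Proof.
  refine (@Grp dcar d_add d_zero d_opp _ _ _ _ _); intros; apply sig_eq;
  simpl; apply functional_extensionality; intros; simpl; lia.
Defined.
End Dsum.

(* Symmetric group of a type, with the product adapted to right actions:
   (s * t) acts as "first s, then t". *)
Section Sym.
Variable X : Type.
Definition symcar :=
  {p : (X -> X) * (X -> X) | (forall x, snd p (fst p x) = x) /\ (forall x, fst p (snd p x) = x)}.
Definition sym_mul (s t : symcar) : symcar.
Proof.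
  exists ((fun x => fst (proj1_sig t) (fst (proj1_sig s) x)),
          (fun x => snd (proj1_sig s) (snd (proj1_sig t) x))).
  destruct s as [[f f'] [H1 H2]], t as [[g g'] [K1 K2]]; simpl in *; split; intros x.
  - rewrite K1; apply H1.
  - rewrite H2; apply K2.
Defined.
Definition sym_one : symcar.
Proof. exists ((fun x => x), (fun x => x)); split; reflexivity. Defined.
Definition sym_inv (s : symcar) : symcar.
Proof.
  exists (snd (proj1_sig s), fst (proj1_sig s)).
  destruct s as [[f f'] [H1 H2]]; simpl; split; assumption.
Defined.
Definition Sym : grp.
Proof.
  refine (@Grp symcar sym_mul sym_one sym_inv _ _ _ _ _); intros;
  apply sig_eq; try reflexivity;
  destruct a as [[f f'] [H1 H2]]; simpl; f_equal; apply functional_extensionality;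
  auto.
Defined.
End Sym.

Definition commg (G : grp) (a b : G) : G :=
  gmul (gmul (gmul (ginv a) (ginv b)) a) b.

Definition perfect (G : grp) : Prop :=
  forall g : G, exists l : list (bool * (G * G)),
    g = fold_right (fun (p : bool * (G * G)) (acc : G) =>
          gmul (if fst p then commg (fst (snd p)) (snd (snd p))
                else ginv (commg (fst (snd p)) (snd (snd p)))) acc) gone l.

Definition central_ext (K I : grp) : Prop :=
  exists p : K -> I, is_hom p /\ (forall y, exists x, p x = y) /\
    (forall k, p k = gone -> forall g, gmul k g = gmul g k).

(* Group homology with trivial Z coefficients in degree 2, via the
   (inhomogeneous) bar complex.  Chains are formal Z-combinations, given as
   lists; [coef c t] is the coefficient of the basis element t in c. *)
Definition coef (T : Type) (c : list (Z * T)) (t : T) : Z :=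
  fold_right (fun (p : Z * T) (acc : Z) =>
    ((if excluded_middle_informative (snd p = t) then fst p else 0) + acc)%Z) 0%Z c.

Definition bar_d2 (G : grp) (c : list (Z * (G * G))) : list (Z * G) :=
  flat_map (fun p => let '(n, (g, h)) := p in
    [(n, h); (- n, gmul g h); (n, g)]%Z) c.
Definition bar_d3 (G : grp) (c : list (Z * (G * G * G))) : list (Z * (G * G)) :=
  flat_map (fun p => let '(n, (g, h, k)) := p in
    [(n, (h, k)); (- n, (gmul g h, k)); (n, (g, gmul h k)); (- n, (g, h))]%Z) c.

Definition H2_trivial (G : grp) : Prop :=
  forall c : list (Z * (G * G)),
    (forall t, coef (bar_d2 c) t = 0%Z) ->
    exists b : list (Z * (G * G * G)), forall t, coef (bar_d3 b) t = coef c t.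

Definition is_quandle (X : Type) (op : X -> X -> X) : Prop :=
  (forall a, op a a = a) /\
  (forall a, is_bij (fun x => op x a)) /\
  (forall a b c, op (op a b) c = op (op a c) (op b c)).

Definition conj_rel (X : Type) (op : X -> X -> X) (H : grp) (f : X -> H) : Prop :=
  forall x y, f (op x y) = gmul (gmul (ginv (f y)) (f x)) (f y).

(* (A, e) is the adjoint group As(X): the group presented by generators e_x
   and the relations above, characterised by its universal property. *)
Definition is_adjoint (X : Type) (op : X -> X -> X) (A : grp) (e : X -> A) : Prop :=
  conj_rel op e /\
  forall (H : grp) (f : X -> H), conj_rel op f ->
    exists phi : A -> H, (is_hom phi /\ forall x, phi (e x) = f x) /\
      forall phi' : A -> H, is_hom phi' -> (forall x, phi' (e x) = f x) -> phi' = phi.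

Definition is_psi (X : Type) (op : X -> X -> X) (A : grp) (e : X -> A)
  (psi : A -> Sym X) : Prop :=
  is_hom psi /\ forall y, fst (proj1_sig (psi (e y))) = (fun x => op x y).

Definition act (X : Type) (A : grp) (psi : A -> Sym X) (x : X) (g : A) : X :=
  fst (proj1_sig (psi g)) x.

Definition orbit (X : Type) (A : grp) (psi : A -> Sym X) (x : X) : X -> Prop :=
  fun y => exists g, act psi x g = y.

Definition Orb (X : Type) (A : grp) (psi : A -> Sym X) : Type :=
  {P : X -> Prop | exists x, P = orbit psi x}.

Definition connected (X : Type) (A : grp) (psi : A -> Sym X) : Prop :=
  inhabited X /\ forall x y, exists g, act psi x g = y.

Definition Inn (X : Type) (A : grp) (psi : A -> Sym X) : grp :=
  Sub (fun s : Sym X => exists g, psi g = s).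

Definition is_eps (X : Type) (A : grp) (e : X -> A) (psi : A -> Sym X)
  (i : Orb psi) (f : A -> Zgrp) : Prop :=
  is_hom f /\ forall x, (proj1_sig i x -> f (e x) = 1%Z) /\
                        (~ proj1_sig i x -> f (e x) = 0%Z).

Definition Kset (X : Type) (A : grp) (e : X -> A) (psi : A -> Sym X) : A -> Prop :=
  fun g => forall (i : Orb psi) (f : A -> Zgrp), @is_eps X A e psi i f -> f g = 0%Z.
Definition Kgrp (X : Type) (A : grp) (e : X -> A) (psi : A -> Sym X) : grp :=
  Sub (Kset e psi).

Arguments is_adjoint {X} op A e.
Arguments is_psi {X} op A e psi.

(* Pick a representative x_i of every orbit i.  As Inn(X) is perfect, psi(e_{x_i}) is the
   image of a commutator word a_i of As(X), so z_i = a_i^-1 e_{x_i} lies in Ker psi, which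
   is central.  Conjugating, every generator e_x is a commutator word times z_{[x]}, hence
   As(X) = [As(X), As(X)] * <z_i>.  Since eps_i(z_j) = [i = j], n |-> prod_i z_i^(n_i)
   splits the sum of the eps_i, giving As(X) = Ker * Z^(O(X)) with Ker = [As(X), As(X)]
   perfect and mapping onto Inn(X) with central kernel.
   In the connected case it remains to see that a perfect central extension p : K -> G
   with H_2(G) = 0 is injective.  Lift an element k of Ker p, written as a commutator word,
   letter by letter along a set-theoretic section sigma of p: k becomes the product of the
   central cocycle sigma(g) sigma(h) sigma(gh)^-1 over a bar 2-cycle.  That cycle is a
   boundary, and the cocycle identity makes the product over a boundary trivial. *)

From Stdlib Require Import ZArith List ClassicalEpsilon FunctionalExtensionality
  PropExtensionality Lia.
Import ListNotations.
Set Implicit Arguments.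
Unset Strict Implicit.

Section GroupTheory.
Variable G : grp.

Lemma mulgI (a b c : G) : gmul a b = gmul a c -> b = c.
Proof.
  intro E. rewrite <- (gmul1l b), <- (gmul1l c), <- (gmulVl a), <- !gmulA, E.
  reflexivity.
Qed.

Lemma mulIg (a b c : G) : gmul b a = gmul c a -> b = c.
Proof.
  intro E. rewrite <- (gmul1r b), <- (gmul1r c), <- (gmulVr a), !gmulA, E.
  reflexivity.
Qed.

Lemma invg_uniq (a b : G) : gmul a b = gone -> b = ginv a.
Proof. intro E. apply (mulgI (a := a)). rewrite E, gmulVr. reflexivity. Qed.

Lemma invgK (a : G) : ginv (ginv a) = a.
Proof. symmetry. apply invg_uniq, gmulVl. Qed.

Lemma invgM (a b : G) : ginv (gmul a b) = gmul (ginv b) (ginv a).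
Proof.
  symmetry. apply invg_uniq.
  rewrite gmulA, <- (gmulA a b), gmulVr, gmul1r, gmulVr. reflexivity.
Qed.

Lemma invg1 : ginv (@gone G) = gone.
Proof. symmetry. apply invg_uniq, gmul1l. Qed.

Definition central (g : G) : Prop := forall h : G, gmul g h = gmul h g.

Lemma central_subgroup : is_subgroup central.
Proof.
  split; [|split]; unfold central.
  - intro h. rewrite gmul1l, gmul1r. reflexivity.
  - intros a b Ha Hb h. rewrite <- gmulA, Hb, gmulA, Ha, <- gmulA. reflexivity.
  - intros a Ha h. apply (mulgI (a := a)).
    rewrite gmulA, gmulVr, gmul1l, gmulA, Ha, <- gmulA, gmulVr, gmul1r.
    reflexivity.
Qed.

Lemma centralV (g : G) : central g -> central (ginv g).
Proof. apply central_subgroup. Qed.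

Fixpoint expgn (g : G) (k : nat) : G :=
  match k with O => gone | S k => gmul g (expgn g k) end.

Lemma expgnSr (g : G) k : expgn g (S k) = gmul (expgn g k) g.
Proof.
  induction k as [|k IH]; simpl.
  - rewrite gmul1r, gmul1l. reflexivity.
  - simpl in IH. rewrite IH at 1. rewrite gmulA. reflexivity.
Qed.

Definition expgz (g : G) (n : Z) : G :=
  if Z.leb 0 n then expgn g (Z.to_nat n) else expgn (ginv g) (Z.to_nat (- n)).

Lemma expgz0 (g : G) : expgz g 0 = gone.
Proof. reflexivity. Qed.

Lemma expgz1 (g : G) : expgz g 1 = g.
Proof. apply gmul1r. Qed.

Lemma expgz_add1 (g : G) n : expgz g (n + 1) = gmul (expgz g n) g.
Proof.
  unfold expgz. destruct (Z.leb_spec 0 n), (Z.leb_spec 0 (n + 1)); try lia.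
  - replace (Z.to_nat (n + 1)) with (S (Z.to_nat n)) by lia. apply expgnSr.
  - replace n with (-1)%Z by lia. simpl. rewrite gmul1r, gmulVl. reflexivity.
  - replace (Z.to_nat (- n)) with (S (Z.to_nat (- (n + 1)))) by lia.
    rewrite expgnSr, <- gmulA, gmulVl, gmul1r. reflexivity.
Qed.

Lemma expgz_sub1 (g : G) n : expgz g (n - 1) = gmul (expgz g n) (ginv g).
Proof.
  replace n with ((n - 1) + 1)%Z at 2 by lia.
  rewrite expgz_add1, <- gmulA, gmulVr, gmul1r. reflexivity.
Qed.

Lemma expgzD (g : G) n m : expgz g (n + m) = gmul (expgz g n) (expgz g m).
Proof.
  induction m using Z.peano_ind.
  - rewrite Z.add_0_r, expgz0, gmul1r. reflexivity.
  - rewrite <- Z.add_1_r, Z.add_assoc, !expgz_add1, IHm, gmulA. reflexivity.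
  - rewrite <- Z.sub_1_r, Z.add_sub_assoc, !expgz_sub1, IHm, gmulA. reflexivity.
Qed.

Lemma expgzN (g : G) n : expgz g (- n) = ginv (expgz g n).
Proof. apply invg_uniq. rewrite <- expgzD, Z.add_opp_diag_r. reflexivity. Qed.

Lemma subgroup_expgz (P : G -> Prop) g n : is_subgroup P -> P g -> P (expgz g n).
Proof.
  intros [P1 [PM PV]] Pg. induction n using Z.peano_ind.
  - exact P1.
  - rewrite <- Z.add_1_r, expgz_add1. auto.
  - rewrite <- Z.sub_1_r, expgz_sub1. auto.
Qed.

Lemma central_expgz (g : G) n : central g -> central (expgz g n).
Proof. apply subgroup_expgz, central_subgroup. Qed.

Lemma expgzM_central (a c : G) n :
  central a -> central c -> expgz (gmul a c) n = gmul (expgz a n) (expgz c n).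
Proof.
  intros Ca Cc. induction n using Z.peano_ind.
  - rewrite !expgz0, gmul1l. reflexivity.
  - rewrite <- Z.add_1_r, !expgz_add1, IHn, <- !gmulA. f_equal.
    rewrite !gmulA. f_equal. apply (central_expgz n Cc).
  - rewrite <- Z.sub_1_r, !expgz_sub1, IHn, invgM, <- !gmulA. f_equal.
    rewrite (centralV Ca), gmulA. reflexivity.
Qed.

Lemma commgV (a b : G) : ginv (commg a b) = commg b a.
Proof. unfold commg. rewrite !invgM, !invgK, !gmulA. reflexivity. Qed.

Lemma commg_centralMl (a c b : G) : central c -> commg (gmul a c) b = commg a b.
Proof.
  intro Cc. unfold commg. rewrite invgM, <- (Cc a), (gmulA _ c a),
    <- (Cc (gmul (gmul (ginv c) (ginv a)) (ginv b))), !gmulA, gmulVr, gmul1l.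
  reflexivity.
Qed.

Lemma commg_centralMr (a b c : G) : central c -> commg a (gmul b c) = commg a b.
Proof.
  intro Cc. rewrite <- (invgK (commg a (gmul b c))), commgV, commg_centralMl,
    <- commgV, invgK; auto.
Qed.

End GroupTheory.

Section Homomorphisms.
Variables (G H : grp) (f : G -> H).
Hypothesis f_hom : is_hom f.

Lemma hom1 : f gone = gone.
Proof. apply (mulgI (a := f gone)). rewrite <- f_hom, !gmul1r. reflexivity. Qed.

Lemma homV a : f (ginv a) = ginv (f a).
Proof. apply invg_uniq. rewrite <- f_hom, gmulVr. apply hom1. Qed.

Lemma hom_expgz g n : f (expgz g n) = expgz (f g) n.
Proof.
  induction n using Z.peano_ind.
  - apply hom1.
  - rewrite <- Z.add_1_r, !expgz_add1, f_hom, IHn. reflexivity.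
  - rewrite <- Z.sub_1_r, !expgz_sub1, f_hom, IHn, homV. reflexivity.
Qed.

Lemma iso_of_trivial_kernel :
  (forall y, exists x, f x = y) -> (forall x, f x = gone -> x = gone) -> is_iso f.
Proof.
  intros f_surj f_ker. split; [exact f_hom|].
  exists (fun y => proj1_sig (constructive_indefinite_description _ (f_surj y))).
  split.
  - intro x. destruct (constructive_indefinite_description _ (f_surj (f x))) as [x' E].
    simpl. apply (mulIg (a := ginv x)). rewrite gmulVr. apply f_ker.
    rewrite f_hom, homV, E. apply gmulVr.
  - intro y. destruct (constructive_indefinite_description _ (f_surj y)). auto.
Qed.

End Homomorphisms.

Lemma iso_comp (G H L : grp) (f : G -> H) (g : H -> L) :
  is_iso f -> is_iso g -> is_iso (fun x => g (f x)).
Proof.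
  intros [Hf [f' [F1 F2]]] [Hg [g' [G1 G2]]]. split.
  - intros a b. rewrite Hf, Hg. reflexivity.
  - exists (fun y => f' (g' y)). split; intros; rewrite ?G1, ?F1, ?F2, ?G2; reflexivity.
Qed.

Lemma iso_prod (G H G' H' : grp) (f : G -> G') (g : H -> H') :
  is_iso f -> is_iso g ->
  is_iso (fun x : prodgrp G H => (f (fst x), g (snd x)) : prodgrp G' H').
Proof.
  intros [Hf [f' [F1 F2]]] [Hg [g' [G1 G2]]]. split.
  - intros [a b] [c d]. simpl. rewrite Hf, Hg. reflexivity.
  - exists (fun y : prodgrp G' H' => (f' (fst y), g' (snd y)) : prodgrp G H).
    split; intros [a b]; simpl; rewrite ?G1, ?F1, ?F2, ?G2; reflexivity.
Qed.

Lemma val_hom (G : grp) (P : G -> Prop) : is_hom (fun x : Sub P => proj1_sig x).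
Proof. intros a b. reflexivity. Qed.

Lemma prodgrp_eq (G H : grp) (a b : prodgrp G H) : fst a = fst b -> snd a = snd b -> a = b.
Proof. destruct a, b; simpl; intros; subst; reflexivity. Qed.

Lemma Zsum_eq (I : Type) (a b : Zsum I) : (forall i, proj1_sig a i = proj1_sig b i) -> a = b.
Proof. intro E. apply sig_eq, functional_extensionality, E. Qed.

Lemma expgz_Z (x : Zgrp) n : expgz x n = (n * x)%Z.
Proof.
  induction n using Z.peano_ind.
  - reflexivity.
  - rewrite <- Z.add_1_r, expgz_add1, IHn. simpl. lia.
  - rewrite <- Z.sub_1_r, expgz_sub1, IHn. simpl. lia.
Qed.

Definition kron (T : Type) (t u : T) : Z :=
  if excluded_middle_informative (t = u) then 1%Z else 0%Z.

Lemma coef_cons (T : Type) n (t : T) l u :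
  coef ((n, t) :: l) u = (n * kron t u + coef l u)%Z.
Proof. simpl. unfold kron. destruct (excluded_middle_informative (t = u)); lia. Qed.

Lemma coef_cat (T : Type) (l1 l2 : list (Z * T)) t :
  coef (l1 ++ l2) t = (coef l1 t + coef l2 t)%Z.
Proof. induction l1 as [|[n s] l1 IH]; simpl; [reflexivity|]. rewrite IH. lia. Qed.

Definition chain_opp (T : Type) (l : list (Z * T)) : list (Z * T) :=
  map (fun p => (- fst p, snd p)%Z) l.

Lemma coef_chain_opp (T : Type) (l : list (Z * T)) t :
  coef (chain_opp l) t = (- coef l t)%Z.
Proof.
  induction l as [|[n s] l IH]; [reflexivity|].
  simpl chain_opp. rewrite !coef_cons, IH. simpl. lia.
Qed.

Definition chain_drop (T : Type) (t0 : T) (l : list (Z * T)) : list (Z * T) :=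
  filter (fun p => if excluded_middle_informative (snd p = t0) then false else true) l.

Lemma coef_chain_drop (T : Type) (t0 : T) l t :
  coef (chain_drop t0 l) t = if excluded_middle_informative (t = t0) then 0%Z else coef l t.
Proof.
  induction l as [|[n s] l IH]; simpl.
  - destruct (excluded_middle_informative (t = t0)); reflexivity.
  - destruct (excluded_middle_informative (s = t0)) as [->|Ns]; simpl; rewrite IH;
      destruct (excluded_middle_informative (t = t0)) as [->|Nt].
    + reflexivity.
    + destruct (excluded_middle_informative (t0 = t)); [congruence|]. lia.
    + destruct (excluded_middle_informative (s = t0)); [congruence|]. reflexivity.
    + reflexivity.
Qed.

Lemma length_chain_drop (T : Type) (t0 : T) n l :
  (length (chain_drop t0 ((n, t0) :: l)) < length ((n, t0) :: l))%nat.
Proof.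
  unfold chain_drop. simpl.
  destruct (excluded_middle_informative (t0 = t0)); [|congruence].
  pose proof (filter_length_le
    (fun p : Z * T => if excluded_middle_informative (snd p = t0) then false else true) l).
  lia.
Qed.

Section CentralProducts.
Variables (G : grp) (T : Type) (phi : T -> G).
Hypothesis phi_central : forall t, central (phi t).

Definition zprod (l : list (Z * T)) : G :=
  fold_right (fun p acc => gmul (expgz (phi (snd p)) (fst p)) acc) gone l.

Lemma zprod_cons n t l : zprod ((n, t) :: l) = gmul (expgz (phi t) n) (zprod l).
Proof. reflexivity. Qed.

Lemma zprod_cat l1 l2 : zprod (l1 ++ l2) = gmul (zprod l1) (zprod l2).
Proof.
  induction l1 as [|p l1 IH]; simpl; [rewrite gmul1l; reflexivity|].
  rewrite IH, gmulA. reflexivity.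
Qed.

Lemma subgroup_zprod (P : G -> Prop) l :
  is_subgroup P -> (forall t, P (phi t)) -> P (zprod l).
Proof.
  intros HP Pphi. induction l as [|p l IH]; simpl; [apply HP|].
  apply HP; [apply subgroup_expgz|]; auto.
Qed.

Lemma central_zprod l : central (zprod l).
Proof. apply subgroup_zprod; [apply central_subgroup | exact phi_central]. Qed.

Lemma zprod_extract t0 l :
  zprod l = gmul (expgz (phi t0) (coef l t0)) (zprod (chain_drop t0 l)).
Proof.
  induction l as [|[n s] l IH]; simpl.
  - rewrite expgz0, gmul1l. reflexivity.
  - destruct (excluded_middle_informative (s = t0)) as [->|Ns]; simpl.
    + rewrite IH, expgzD, gmulA. reflexivity.
    + rewrite IH, !gmulA. f_equal. apply central_expgz, phi_central.
Qed.

Lemma zprod_coef0 l : (forall t, coef l t = 0%Z) -> zprod l = gone.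
Proof.
  remember (length l) as k. revert l Heqk.
  induction k as [k IH] using lt_wf_ind. intros l -> l0.
  destruct l as [|[n t0] l]; [reflexivity|].
  rewrite (zprod_extract t0), l0, expgz0, gmul1l.
  apply (IH _ (length_chain_drop t0 n l) _ eq_refl).
  intro t. rewrite coef_chain_drop.
  destruct (excluded_middle_informative (t = t0)); [reflexivity | apply l0].
Qed.

Lemma zprod_chain_opp l : zprod (chain_opp l) = ginv (zprod l).
Proof.
  induction l as [|[n t] l IH]; simpl; [symmetry; apply invg1|].
  rewrite IH, invgM, expgzN. apply (centralV (central_expgz n (phi_central t))).
Qed.

Lemma zprod_coef l l' : (forall t, coef l t = coef l' t) -> zprod l = zprod l'.
Proof.
  intro E. apply (mulIg (a := ginv (zprod l'))). rewrite gmulVr.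
  rewrite <- zprod_chain_opp, <- zprod_cat. apply zprod_coef0.
  intro t. rewrite coef_cat, coef_chain_opp, E. lia.
Qed.

End CentralProducts.

Definition commterm (G : grp) (q : bool * (G * G)) : G :=
  if fst q then commg (fst (snd q)) (snd (snd q))
  else ginv (commg (fst (snd q)) (snd (snd q))).

Definition commword (G : grp) (l : list (bool * (G * G))) : G :=
  fold_right (fun q acc => gmul (commterm q) acc) gone l.

Lemma commword_cat (G : grp) (l1 l2 : list (bool * (G * G))) :
  commword (l1 ++ l2) = gmul (commword l1) (commword l2).
Proof.
  induction l1 as [|q l1 IH]; simpl; [rewrite gmul1l; reflexivity|].
  rewrite IH, gmulA. reflexivity.
Qed.

Lemma commwordV (G : grp) (l : list (bool * (G * G))) :
  ginv (commword l) = commword (rev (map (fun q => (negb (fst q), snd q)) l)).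
Proof.
  induction l as [|[b [u v]] l IH]; simpl; [apply invg1|].
  rewrite invgM, IH, commword_cat. f_equal. simpl. rewrite gmul1r.
  unfold commterm. destruct b; simpl; [reflexivity | apply invgK].
Qed.

Definition map_commterm (G H : grp) (f : G -> H) (q : bool * (G * G)) : bool * (H * H) :=
  (fst q, (f (fst (snd q)), f (snd (snd q)))).

Lemma hom_commword (G H : grp) (f : G -> H) l :
  is_hom f -> f (commword l) = commword (map (map_commterm f) l).
Proof.
  intro Hf. induction l as [|[b [u v]] l IH]; simpl; [apply hom1, Hf|].
  rewrite Hf, IH. f_equal. unfold commterm, commg; simpl.
  destruct b; rewrite ?(homV Hf), !Hf, !(homV Hf); reflexivity.
Qed.

Lemma commword_Z (l : list (bool * (Zgrp * Zgrp))) : commword l = 0%Z.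
Proof.
  induction l as [|[b [u v]] l IH]; simpl; [reflexivity|].
  rewrite IH. unfold commterm, commg. destruct b; simpl; lia.
Qed.

Section FormalSums.
Variable I : Type.

Lemma coef_map_NoDup (h : I -> Z) (L : list I) i : NoDup L ->
  coef (map (fun t => (h t, t)) L) i =
  if excluded_middle_informative (In i L) then h i else 0%Z.
Proof.
  induction L as [|a L IH]; intro ND; simpl.
  - destruct (excluded_middle_informative False) as [[]|]; reflexivity.
  - inversion ND; subst. rewrite IH by assumption.
    destruct (excluded_middle_informative (a = i)) as [E|E];
    destruct (excluded_middle_informative (a = i \/ In i L)) as [E1|E1];
    destruct (excluded_middle_informative (In i L)) as [E2|E2]; subst; try tauto; lia.
Qed.

Lemma Zsum_chain (n : Zsum I) : exists l, forall i, coef l i = proj1_sig n i.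
Proof.
  destruct (proj2_sig n) as [L HL].
  set (dec := fun a b : I => excluded_middle_informative (a = b)).
  exists (map (fun t => (proj1_sig n t, t)) (nodup dec L)). intro i.
  rewrite coef_map_NoDup by apply NoDup_nodup.
  destruct (excluded_middle_informative (In i (nodup dec L))) as [H|H]; [reflexivity|].
  rewrite nodup_In in H. destruct (Z.eq_dec (proj1_sig n i) 0); auto. exfalso. auto.
Qed.

Definition Zsum_delta (i : I) : Zsum I.
Proof.
  exists (kron i). exists [i]. intros j Hj. unfold kron in Hj.
  destruct (excluded_middle_informative (i = j)); [left; assumption | congruence].
Defined.

Lemma Zsum_single_iso (i0 : I) :
  (forall i, i = i0) -> is_iso (fun n : Zsum I => proj1_sig n i0 : Zgrp).
Proof.
  intro single. apply iso_of_trivial_kernel.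
  - intros a b. reflexivity.
  - intro m. unshelve eexists (exist _ (fun _ => m) _); [|reflexivity].
    exists [i0]. intros i _. left. symmetry. apply single.
  - intros n Hn. apply Zsum_eq. intro i. rewrite (single i). exact Hn.
Qed.

End FormalSums.

Section PerfectCentralExtension.
Variables (K G : grp) (p : K -> G).
Hypotheses (p_hom : is_hom p) (p_surj : forall y, exists x, p x = y)
  (p_ker_central : forall k, p k = gone -> forall g, gmul k g = gmul g k).

Definition sect (y : G) : K :=
  if excluded_middle_informative (y = gone) then gone
  else proj1_sig (constructive_indefinite_description _ (p_surj y)).

Lemma p_sect y : p (sect y) = y.
Proof.
  unfold sect. destruct (excluded_middle_informative (y = gone)) as [->|].
  - apply hom1, p_hom.
  - destruct (constructive_indefinite_description _ (p_surj y)). assumption.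
Qed.

Lemma sect1 : sect gone = gone.
Proof. unfold sect. destruct (excluded_middle_informative (@gone G = gone)); congruence. Qed.

Lemma ker_p_central k : p k = gone -> central k.
Proof. exact (p_ker_central (k := k)). Qed.

Definition cocyc (t : G * G) : K :=
  gmul (gmul (sect (fst t)) (sect (snd t))) (ginv (sect (gmul (fst t) (snd t)))).

Lemma cocyc_central t : central (cocyc t).
Proof.
  apply ker_p_central. unfold cocyc.
  rewrite !p_hom, (homV p_hom), !p_sect. apply gmulVr.
Qed.

Lemma sectM g h : gmul (sect g) (sect h) = gmul (cocyc (g, h)) (sect (gmul g h)).
Proof. unfold cocyc; simpl. rewrite <- gmulA, gmulVl, gmul1r. reflexivity. Qed.

Lemma cocyc_cocycle g h k :
  gmul (cocyc (g, h)) (cocyc (gmul g h, k)) = gmul (cocyc (h, k)) (cocyc (g, gmul h k)).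
Proof.
  apply (mulIg (a := sect (gmul (gmul g h) k))).
  transitivity (gmul (gmul (sect g) (sect h)) (sect k)).
  - rewrite <- gmulA, <- sectM, gmulA, <- sectM. reflexivity.
  - rewrite <- (gmulA (cocyc (h, k))), <- (gmulA g h k), <- sectM, gmulA,
      (cocyc_central (h, k) (sect g)), <- gmulA, <- (gmulA (sect g)), <- sectM.
    reflexivity.
Qed.

Lemma zprod_cocyc_bar_d3 b : zprod cocyc (bar_d3 b) = gone.
Proof.
  induction b as [|[n [[g h] k]] b IH]; [reflexivity|].
  unfold bar_d3 in *. simpl flat_map. rewrite !zprod_cons, IH, gmul1r, !expgzN.
  set (a1 := expgz (cocyc (h, k)) n). set (a2 := expgz (cocyc (gmul g h, k)) n).
  set (a3 := expgz (cocyc (g, gmul h k)) n). set (a4 := expgz (cocyc (g, h)) n).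
  assert (E : gmul a1 a3 = gmul a4 a2).
  { unfold a1, a2, a3, a4. rewrite <- !expgzM_central by apply cocyc_central.
    rewrite cocyc_cocycle. reflexivity. }
  assert (C3 : central a3) by apply central_expgz, cocyc_central.
  rewrite (gmulA (ginv a2)), <- (C3 (ginv a2)), <- (gmulA a3), (gmulA a1), E,
    <- !gmulA, (gmulA a2), gmulVr, gmul1l, gmulVr.
  reflexivity.
Qed.

(* A word in G is a list of letters x^{+1} ([true]) or x^{-1} ([false]).
   [word_chain w] is the bar 2-chain recording how [sect] fails to be multiplicative
   along [w]. *)
Definition sect_letter (l : bool * G) : K :=
  if fst l then sect (snd l) else ginv (sect (snd l)).

Definition sect_word (w : list (bool * G)) : K :=
  fold_right (fun l acc => gmul (sect_letter l) acc) gone w.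

Definition eval_word (w : list (bool * G)) : G :=
  fold_right (fun (l : bool * G) acc =>
    gmul (if fst l then snd l else ginv (snd l)) acc) gone w.

Fixpoint word_chain (w : list (bool * G)) : list (Z * (G * G)) :=
  match w with
  | nil => nil
  | (true, x) :: w' => (1%Z, (x, eval_word w')) :: word_chain w'
  | (false, x) :: w' => ((-1)%Z, (x, gmul (ginv x) (eval_word w'))) :: word_chain w'
  end.

Definition word_letters (w : list (bool * G)) : list (Z * G) :=
  map (fun l : bool * G => (if fst l then 1%Z else (-1)%Z, snd l)) w.

Lemma sect_word_chain w :
  sect_word w = gmul (zprod cocyc (word_chain w)) (sect (eval_word w)).
Proof.
  induction w as [|[[|] x] w IH].
  - simpl. rewrite sect1, gmul1l. reflexivity.
  - change (gmul (sect x) (sect_word w) =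
      gmul (gmul (expgz (cocyc (x, eval_word w)) 1) (zprod cocyc (word_chain w)))
           (sect (gmul x (eval_word w)))).
    rewrite IH, expgz1.
    set (W := zprod cocyc (word_chain w)).
    assert (CW : central W) by apply central_zprod, cocyc_central.
    rewrite (gmulA (sect x) W), <- (CW (sect x)), <- gmulA, sectM, !gmulA, (CW (cocyc _)).
    reflexivity.
  - change (gmul (ginv (sect x)) (sect_word w) =
      gmul (gmul (expgz (cocyc (x, gmul (ginv x) (eval_word w))) (- (1)))
        (zprod cocyc (word_chain w))) (sect (gmul (ginv x) (eval_word w)))).
    rewrite IH, expgzN, expgz1.
    set (t := eval_word w). set (y := gmul (ginv x) t).
    replace (sect t) with (gmul (ginv (cocyc (x, y))) (gmul (sect x) (sect y))).
    2: { rewrite sectM. unfold y. rewrite gmulA, gmulVl, gmul1l, gmulA, gmulVr, gmul1l.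
         reflexivity. }
    set (F := cocyc (x, y)). set (W := zprod cocyc (word_chain w)).
    assert (CF : central (ginv F)) by apply centralV, cocyc_central.
    assert (CW : central W) by apply central_zprod, cocyc_central.
    rewrite (gmulA (ginv F)), (CF (sect x)), (gmulA W), (gmulA W), (CW (sect x)),
      !gmulA, gmulVl, gmul1l, (CW (ginv F)).
    reflexivity.
Qed.

Lemma p_sect_word w : p (sect_word w) = eval_word w.
Proof.
  induction w as [|[[|] x] w IH].
  - apply hom1, p_hom.
  - change (p (gmul (sect x) (sect_word w)) = gmul x (eval_word w)).
    rewrite p_hom, IH, p_sect. reflexivity.
  - change (p (gmul (ginv (sect x)) (sect_word w)) = gmul (ginv x) (eval_word w)).
    rewrite p_hom, IH, (homV p_hom), p_sect. reflexivity.
Qed.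

Lemma bar_d2_word_chain w u :
  coef (bar_d2 (word_chain w)) u =
  (coef (word_letters w) u - kron (eval_word w) u + kron gone u)%Z.
Proof.
  induction w as [|[[|] x] w IH]; simpl word_chain; simpl word_letters.
  - simpl. rewrite Z.add_opp_diag_l. reflexivity.
  - change (coef ([(1, eval_word w); (-1, gmul x (eval_word w)); (1, x)]%Z
      ++ bar_d2 (word_chain w)) u =
      (coef ((1%Z, x) :: word_letters w) u - kron (gmul x (eval_word w)) u
       + kron gone u)%Z).
    rewrite coef_cat, !coef_cons, IH. change (coef [] u) with 0%Z. lia.
  - change (coef ([(-1, gmul (ginv x) (eval_word w)); (- -1, gmul x (gmul (ginv x)
      (eval_word w))); (-1, x)]%Z ++ bar_d2 (word_chain w)) u =
      (coef (((-1)%Z, x) :: word_letters w) u - kron (gmul (ginv x) (eval_word w)) u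
       + kron gone u)%Z).
    rewrite coef_cat, !coef_cons, IH, gmulA, gmulVr, gmul1l. change (coef [] u) with 0%Z. lia.
Qed.

Lemma sect_word_cat w1 w2 : sect_word (w1 ++ w2) = gmul (sect_word w1) (sect_word w2).
Proof.
  induction w1 as [|l w1 IH]; simpl; [rewrite gmul1l; reflexivity|].
  rewrite IH, gmulA. reflexivity.
Qed.

Lemma commg_sect u v : commg u v = commg (sect (p u)) (sect (p v)).
Proof.
  assert (split : forall w, exists c, w = gmul (sect (p w)) c /\ central c).
  { intro w. exists (gmul (ginv (sect (p w))) w). split.
    - rewrite gmulA, gmulVr, gmul1l. reflexivity.
    - apply ker_p_central. rewrite p_hom, (homV p_hom), p_sect. apply gmulVl. }
  destruct (split u) as [c [Eu Cc]], (split v) as [d [Ev Cd]].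
  rewrite Eu at 1. rewrite Ev at 1. rewrite commg_centralMl, commg_centralMr; auto.
Qed.

Definition comm_block (q : bool * (K * K)) : list (bool * G) :=
  let a := p (fst (snd q)) in let b := p (snd (snd q)) in
  if fst q then [(false, a); (false, b); (true, a); (true, b)]
  else [(false, b); (false, a); (true, b); (true, a)].

Lemma sect_word_comm_block q : sect_word (comm_block q) = commterm q.
Proof.
  destruct q as [[|] [u v]]; unfold comm_block, commterm; simpl;
    rewrite ?commgV, commg_sect; unfold commg, sect_letter; simpl;
    rewrite gmul1r, !gmulA; reflexivity.
Qed.

Lemma coef_word_letters_comm_block q u : coef (word_letters (comm_block q)) u = 0%Z.
Proof.
  destruct q as [[|] [a b]]; unfold comm_block, word_letters; simpl map;
    rewrite !coef_cons; change (coef [] u) with 0%Z; lia.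
Qed.

Lemma perfect_central_ext_trivial_kernel :
  perfect K -> H2_trivial G -> forall k, p k = gone -> k = gone.
Proof.
  intros K_perfect G_H2 k pk1. destruct (K_perfect k) as [L EL].
  set (w := flat_map comm_block L).
  assert (Ew : sect_word w = k).
  { rewrite EL. unfold w. clear w EL pk1. induction L as [|q L IH]; [reflexivity|].
    simpl flat_map. rewrite sect_word_cat, IH, sect_word_comm_block. reflexivity. }
  assert (Ev : eval_word w = gone) by (rewrite <- p_sect_word, Ew; exact pk1).
  assert (letters0 : forall u, coef (word_letters w) u = 0%Z).
  { intro u. unfold w. clear w Ew Ev EL pk1. induction L as [|q L IH]; [reflexivity|].
    simpl flat_map. unfold word_letters in *. rewrite map_app, coef_cat, IH.
    fold (word_letters (comm_block q)). rewrite coef_word_letters_comm_block. reflexivity. }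
  assert (cycle : forall u, coef (bar_d2 (word_chain w)) u = 0%Z).
  { intro u. rewrite bar_d2_word_chain, letters0, Ev. lia. }
  destruct (G_H2 _ cycle) as [b Eb].
  rewrite <- Ew, sect_word_chain, Ev, sect1, gmul1r,
    <- (zprod_coef cocyc_central Eb).
  apply zprod_cocyc_bar_d3.
Qed.

End PerfectCentralExtension.

Section AdjointGroup.
Variables (X : Type) (op : X -> X -> X) (A : grp) (e : X -> A) (psi : A -> Sym X).
Hypotheses (A_adj : is_adjoint op A e) (psi_spec : is_psi op A e psi).

Lemma psi_hom : is_hom psi.
Proof. apply psi_spec. Qed.

Lemma act_mul x g h : act psi x (gmul g h) = act psi (act psi x g) h.
Proof. unfold act. rewrite psi_hom. reflexivity. Qed.

Lemma act1 x : act psi x gone = x.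
Proof. unfold act. rewrite (hom1 psi_hom). reflexivity. Qed.

Lemma actK x g : act psi (act psi x g) (ginv g) = x.
Proof. rewrite <- act_mul, gmulVr. apply act1. Qed.

Lemma act_e x y : act psi x (e y) = op x y.
Proof. unfold act. rewrite (proj2 psi_spec). reflexivity. Qed.

(* Restrict the universal map A -> A to the subgroup and use uniqueness. *)
Lemma adjoint_ind (P : A -> Prop) : is_subgroup P -> (forall x, P (e x)) -> forall g, P g.
Proof.
  intros HP Pe g. destruct A_adj as [e_rel univ].
  set (e' := fun x => exist (fun g => is_subgroup P -> P g) (e x) (fun _ => Pe x) : Sub P).
  destruct (univ (Sub P) e') as [phi [[phi_hom phi_e] _]].
  { intros x y. apply sig_eq. apply e_rel. }
  destruct (univ A e e_rel) as [phi0 [_ unique]].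
  assert (E1 : (fun g => proj1_sig (phi g)) = phi0).
  { apply unique; [intros a b; rewrite phi_hom | intro x; rewrite phi_e]; reflexivity. }
  assert (E2 : (fun g : A => g) = phi0) by (apply unique; [intros a b|]; reflexivity).
  change (P ((fun g : A => g) g)). rewrite E2, <- E1.
  exact (proj2_sig (phi g) HP).
Qed.

Lemma e_act g x : e (act psi x g) = gmul (gmul (ginv g) (e x)) g.
Proof.
  revert g x. apply (adjoint_ind (P := fun g => forall x,
    e (act psi x g) = gmul (gmul (ginv g) (e x)) g)).
  - split; [|split].
    + intro x. rewrite act1, invg1, gmul1l, gmul1r. reflexivity.
    + intros a b Ha Hb x. rewrite act_mul, Hb, Ha, invgM, !gmulA. reflexivity.
    + intros a Ha x. set (y := act psi x (ginv a)).
      assert (Ex : e x = gmul (gmul (ginv a) (e y)) a).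
      { rewrite <- Ha. unfold y. rewrite <- act_mul, gmulVl, act1. reflexivity. }
      rewrite Ex, invgK, !gmulA, gmulVr, gmul1l, <- gmulA, gmulVr, gmul1r. reflexivity.
  - intros y x. rewrite act_e. apply (proj1 A_adj).
Qed.

Lemma ker_psi_central g : psi g = gone -> central g.
Proof.
  intro psi_g. red. apply (adjoint_ind (P := fun h => gmul g h = gmul h g)).
  - split; [|split].
    + rewrite gmul1l, gmul1r. reflexivity.
    + intros a b Ha Hb. rewrite gmulA, Ha, <- gmulA, Hb, gmulA. reflexivity.
    + intros a Ha. apply (mulgI (a := a)).
      rewrite gmulA, <- Ha, <- gmulA, gmulVr, gmulA, gmulVr, gmul1l, gmul1r. reflexivity.
  - intro x. assert (Ex : act psi x g = x) by (unfold act; rewrite psi_g; reflexivity).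
    pose proof (e_act g x) as E. rewrite Ex in E.
    rewrite E at 1. rewrite !gmulA, gmulVr, gmul1l. reflexivity.
Qed.

Definition is_commword (g : A) : Prop := exists l, g = commword l.

Lemma commword_subgroup : is_subgroup is_commword.
Proof.
  split; [|split].
  - exists nil. reflexivity.
  - intros a b [l1 ->] [l2 ->]. exists (l1 ++ l2). symmetry. apply commword_cat.
  - intros a [l ->]. eexists. apply commwordV.
Qed.

Lemma is_commword_commg a b : is_commword (commg a b).
Proof. exists [(true, (a, b))]. simpl. rewrite gmul1r. reflexivity. Qed.

Lemma hom_Z_commword (f : A -> Zgrp) b : is_hom f -> is_commword b -> f b = 0%Z.
Proof. intros f_hom [l ->]. rewrite (hom_commword _ f_hom). apply commword_Z. Qed.

Lemma Inn_subgroup : is_subgroup (fun s : Sym X => exists g, psi g = s).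
Proof.
  split; [|split].
  - exists gone. apply (hom1 psi_hom).
  - intros a b [g <-] [h <-]. exists (gmul g h). apply psi_hom.
  - intros a [g <-]. exists (ginv g). apply (homV psi_hom).
Qed.

Definition Inn_lift (y : Inn psi) : A :=
  proj1_sig (constructive_indefinite_description _ (proj2_sig y Inn_subgroup)).

Lemma psi_Inn_lift y : psi (Inn_lift y) = proj1_sig y.
Proof. unfold Inn_lift. destruct (constructive_indefinite_description _ _). assumption. Qed.

Definition orbit_of (x : X) : Orb psi := exist _ (orbit psi x) (ex_intro _ x eq_refl).

Lemma orbit_trans x y z : orbit psi x y -> orbit psi y z -> orbit psi x z.
Proof. intros [g <-] [h <-]. exists (gmul g h). apply act_mul. Qed.

Lemma orbit_sym x y : orbit psi x y -> orbit psi y x.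
Proof. intros [g <-]. exists (ginv g). apply actK. Qed.

Lemma Orb_eq_orbit_of (i : Orb psi) x : proj1_sig i x -> i = orbit_of x.
Proof.
  destruct i as [P [x0 ->]]. simpl. intro Hx. apply sig_eq. simpl.
  apply functional_extensionality. intro y. apply propositional_extensionality.
  split; apply orbit_trans; [apply orbit_sym|]; exact Hx.
Qed.

Lemma Orb_op (i : Orb psi) x y : proj1_sig i (op x y) <-> proj1_sig i x.
Proof.
  destruct i as [P [x0 ->]]. simpl. rewrite <- act_e.
  split; intro Hx; apply (orbit_trans Hx); [apply orbit_sym|]; exists (e y); reflexivity.
Qed.

Definition orb_rep (i : Orb psi) : X :=
  proj1_sig (constructive_indefinite_description _ (proj2_sig i)).

Lemma orb_rep_mem i : proj1_sig i (orb_rep i).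
Proof.
  unfold orb_rep. destruct (constructive_indefinite_description _ _) as [x ->].
  exists gone. apply act1.
Qed.

Lemma orb_rep_memE i j : proj1_sig i (orb_rep j) <-> j = i.
Proof.
  split; [|intros ->; apply orb_rep_mem].
  intro H. rewrite (Orb_eq_orbit_of H). apply Orb_eq_orbit_of, orb_rep_mem.
Qed.

Lemma connected_Orb_single : connected psi -> exists i0 : Orb psi, forall i, i = i0.
Proof.
  intros [[x0] transitive]. exists (orbit_of x0). intro i.
  rewrite (Orb_eq_orbit_of (orb_rep_mem i)). symmetry.
  apply Orb_eq_orbit_of, transitive.
Qed.

Definition orb_indicator (i : Orb psi) (x : X) : Zgrp :=
  if excluded_middle_informative (proj1_sig i x) then 1%Z else 0%Z.

Lemma conj_rel_orb_indicator i : conj_rel op (orb_indicator i).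
Proof.
  intros x y. unfold orb_indicator. simpl.
  destruct (excluded_middle_informative (proj1_sig i (op x y))) as [H|H];
  destruct (excluded_middle_informative (proj1_sig i x)) as [H'|H']; try lia;
  exfalso; rewrite (Orb_op i x y) in H; tauto.
Qed.

Lemma is_epsE i f : is_eps e i f <-> is_hom f /\ forall x, f (e x) = orb_indicator i x.
Proof.
  unfold is_eps, orb_indicator. split; intros [f_hom Hf]; split; auto; intro x.
  - destruct (excluded_middle_informative (proj1_sig i x)); apply Hf; assumption.
  - rewrite Hf. destruct (excluded_middle_informative (proj1_sig i x)); split; tauto.
Qed.

Definition eps (i : Orb psi) : A -> Zgrp :=
  proj1_sig (constructive_indefinite_description _
    (proj2 A_adj Zgrp _ (conj_rel_orb_indicator i))).

Lemma eps_spec i : is_eps e i (eps i).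
Proof.
  apply is_epsE. unfold eps. destruct (constructive_indefinite_description _ _) as [f [[]]].
  split; assumption.
Qed.

Lemma eps_hom i : is_hom (eps i).
Proof. apply eps_spec. Qed.

Lemma is_eps_unique i f : is_eps e i f -> f = eps i.
Proof.
  intro Hf. destruct (proj1 (is_epsE i f) Hf) as [f_hom fe].
  destruct (proj1 (is_epsE i (eps i)) (eps_spec i)) as [eps_hom' epse].
  destruct (proj2 A_adj Zgrp _ (conj_rel_orb_indicator i)) as [phi [_ unique]].
  rewrite (unique f f_hom fe), (unique _ eps_hom' epse). reflexivity.
Qed.

Lemma KsetE g : Kset e psi g <-> forall i, eps i g = 0%Z.
Proof.
  split; intro H.
  - intro i. exact (H i _ (eps_spec i)).
  - intros i f Hf. rewrite (is_eps_unique Hf). apply H.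
Qed.

Lemma Kset_subgroup : is_subgroup (Kset e psi).
Proof.
  split; [|split]; intros; rewrite KsetE in *; intro i.
  - apply (hom1 (eps_hom i)).
  - rewrite (eps_hom i). simpl. rewrite H, H0. reflexivity.
  - rewrite (homV (eps_hom i)). simpl. rewrite H. reflexivity.
Qed.

Lemma Kset_commword b : is_commword b -> Kset e psi b.
Proof. intro Hb. apply KsetE. intro i. exact (hom_Z_commword (eps_hom i) Hb). Qed.

Lemma Kgrp_mem (k : Kgrp e psi) : Kset e psi (proj1_sig k).
Proof. apply (proj2_sig k), Kset_subgroup. Qed.

Definition Kgrp_of (g : A) (Kg : Kset e psi g) : Kgrp e psi :=
  exist (fun g => is_subgroup (Kset e psi) -> Kset e psi g) g (fun _ => Kg).

Hypothesis Inn_perfect : perfect (Inn psi).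

Lemma psi_commword_cover g : exists a, is_commword a /\ psi a = psi g.
Proof.
  set (y := exist (fun s => is_subgroup (fun s => exists g, psi g = s) -> exists g, psi g = s)
    (psi g) (fun _ => ex_intro _ g eq_refl) : Inn psi).
  destruct (Inn_perfect y) as [L EL]. change (y = commword L) in EL.
  exists (commword (map (map_commterm Inn_lift) L)). split; [eexists; reflexivity|].
  change (psi g) with (proj1_sig y).
  rewrite (hom_commword _ psi_hom), EL,
    (hom_commword _ (@val_hom _ (fun s : Sym X => exists g, psi g = s))), map_map.
  f_equal. apply map_ext. intros [b [u v]]. unfold map_commterm; simpl.
  rewrite !psi_Inn_lift. reflexivity.
Qed.

Definition orb_comm (i : Orb psi) : A :=
  proj1_sig (constructive_indefinite_description _ (psi_commword_cover (e (orb_rep i)))).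

Lemma orb_comm_spec i : is_commword (orb_comm i) /\ psi (orb_comm i) = psi (e (orb_rep i)).
Proof. unfold orb_comm. destruct (constructive_indefinite_description _ _). assumption. Qed.

Definition zeta (i : Orb psi) : A := gmul (ginv (orb_comm i)) (e (orb_rep i)).

Lemma psi_zeta i : psi (zeta i) = gone.
Proof.
  unfold zeta. rewrite psi_hom, (homV psi_hom), (proj2 (orb_comm_spec i)). apply gmulVl.
Qed.

Lemma zeta_central i : central (zeta i).
Proof. apply ker_psi_central, psi_zeta. Qed.

Lemma e_orb_rep i : e (orb_rep i) = gmul (orb_comm i) (zeta i).
Proof. unfold zeta. rewrite gmulA, gmulVr, gmul1l. reflexivity. Qed.

Lemma eps_zeta i j : eps i (zeta j) = kron j i.
Proof.
  destruct (proj1 (is_epsE i _) (eps_spec i)) as [f_hom fe].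
  unfold zeta.
  rewrite f_hom, (homV f_hom), (hom_Z_commword f_hom (proj1 (orb_comm_spec j))), fe.
  simpl. unfold orb_indicator, kron.
  destruct (excluded_middle_informative (proj1_sig i (orb_rep j))) as [H|H];
  destruct (excluded_middle_informative (j = i)); rewrite ?orb_rep_memE in H; tauto || lia.
Qed.

Lemma eps_zprod_zeta i l : eps i (zprod zeta l) = coef l i.
Proof.
  induction l as [|[n t] l IH]; [apply (hom1 (eps_hom i))|].
  rewrite zprod_cons, (eps_hom i), IH, (hom_expgz (eps_hom i)), coef_cons, eps_zeta,
    expgz_Z.
  reflexivity.
Qed.

Definition zeta_sum (n : Zsum (Orb psi)) : A :=
  zprod zeta (proj1_sig (constructive_indefinite_description _ (Zsum_chain n))).

Lemma zeta_sumE n l : (forall i, coef l i = proj1_sig n i) -> zeta_sum n = zprod zeta l.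
Proof.
  intro Hl. unfold zeta_sum. destruct (constructive_indefinite_description _ _) as [l' Hl'].
  apply zprod_coef; [exact zeta_central|]. intro t. rewrite Hl. apply Hl'.
Qed.

Lemma zeta_sum_hom : is_hom zeta_sum.
Proof.
  intros n m. destruct (Zsum_chain n) as [ln Hn], (Zsum_chain m) as [lm Hm].
  rewrite (zeta_sumE Hn), (zeta_sumE Hm), (zeta_sumE (l := ln ++ lm)), zprod_cat;
    [reflexivity|].
  intro i. rewrite coef_cat, Hn, Hm. reflexivity.
Qed.

Lemma zeta_sum_central n : central (zeta_sum n).
Proof. apply central_zprod, zeta_central. Qed.

Lemma psi_zeta_sum n : psi (zeta_sum n) = gone.
Proof.
  apply (subgroup_zprod (P := fun g => psi g = gone)); [|apply psi_zeta].
  split; [|split].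
  - apply (hom1 psi_hom).
  - intros a b Ha Hb. rewrite psi_hom, Ha, Hb. apply gmul1l.
  - intros a Ha. rewrite (homV psi_hom), Ha. apply invg1.
Qed.

Lemma eps_zeta_sum i n : eps i (zeta_sum n) = proj1_sig n i.
Proof.
  destruct (Zsum_chain n) as [l Hl]. rewrite (zeta_sumE Hl), eps_zprod_zeta. apply Hl.
Qed.

Lemma zeta_sum_delta i : zeta_sum (Zsum_delta i) = zeta i.
Proof.
  rewrite (zeta_sumE (l := [(1%Z, i)])), zprod_cons, expgz1; [apply gmul1r|].
  intro j. rewrite coef_cons. change (coef [] j) with 0%Z. simpl proj1_sig. lia.
Qed.

Lemma commword_zeta_sum_decomposition g :
  exists b, is_commword b /\ exists n, g = gmul b (zeta_sum n).
Proof.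
  revert g. apply adjoint_ind.
  - split; [|split].
    + exists gone. split; [apply commword_subgroup|].
      exists gone. rewrite (hom1 zeta_sum_hom), gmul1l. reflexivity.
    + intros a b [b1 [B1 [n1 ->]]] [b2 [B2 [n2 ->]]].
      exists (gmul b1 b2). split; [apply commword_subgroup; assumption|].
      exists (gmul n1 n2). rewrite zeta_sum_hom, <- !gmulA. f_equal.
      rewrite !gmulA. f_equal. apply zeta_sum_central.
    + intros a [b1 [B1 [n1 ->]]]. exists (ginv b1).
      split; [apply commword_subgroup; assumption|].
      exists (ginv n1). rewrite (homV zeta_sum_hom), invgM.
      apply centralV, zeta_sum_central.
  - intro x. set (i := orbit_of x).
    destruct (orb_rep_mem i) as [h Eh].
    assert (Ex : x = act psi (orb_rep i) (ginv h)) by (rewrite <- Eh; symmetry; apply actK).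
    set (a := orb_comm i). exists (gmul a (commg a (ginv h))). split.
    + apply commword_subgroup; [apply (proj1 (orb_comm_spec i)) | apply is_commword_commg].
    + exists (Zsum_delta i). rewrite zeta_sum_delta, Ex at 1.
      rewrite e_act, e_orb_rep. fold a. unfold commg.
      rewrite !gmulA, gmulVr, gmul1l, <- (gmulA _ (zeta i) (ginv h)),
        (zeta_central i (ginv h)), !gmulA.
      reflexivity.
Qed.

Lemma eps_decomposition i b n :
  is_commword b -> eps i (gmul b (zeta_sum n)) = proj1_sig n i.
Proof.
  intro Hb. rewrite (eps_hom i), (hom_Z_commword (eps_hom i) Hb), eps_zeta_sum. reflexivity.
Qed.

Lemma eps_finite_support g : exists l, forall i, eps i g <> 0%Z -> In i l.
Proof.
  destruct (commword_zeta_sum_decomposition g) as [b [Hb [n ->]]].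
  destruct (proj2_sig n) as [l Hl]. exists l.
  intros i Hi. apply Hl. rewrite <- (eps_decomposition i n Hb). exact Hi.
Qed.

Definition eps_vec (g : A) : Zsum (Orb psi) :=
  exist _ (fun i => eps i g) (eps_finite_support g).

Lemma eps_vec_hom : is_hom eps_vec.
Proof. intros a b. apply Zsum_eq. intro i. apply eps_hom. Qed.

Lemma eps_vec_zeta_sum n : eps_vec (zeta_sum n) = n.
Proof. apply Zsum_eq. intro i. apply eps_zeta_sum. Qed.

Lemma eps_vec_Kgrp (k : Kgrp e psi) : eps_vec (proj1_sig k) = gone.
Proof. apply Zsum_eq. intro i. apply KsetE, Kgrp_mem. Qed.

Lemma Kset_split g : Kset e psi (gmul g (ginv (zeta_sum (eps_vec g)))).
Proof.
  apply KsetE. intro i.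
  rewrite (eps_hom i), (homV (eps_hom i)), eps_zeta_sum. simpl. lia.
Qed.

Definition As_split (g : A) : prodgrp (Kgrp e psi) (Zsum (Orb psi)) :=
  (Kgrp_of (Kset_split g), eps_vec g).

Lemma As_split_iso : is_iso As_split.
Proof.
  split.
  - intros a b. apply prodgrp_eq; simpl; [|apply eps_vec_hom].
    apply sig_eq. simpl. rewrite eps_vec_hom, zeta_sum_hom, invgM, <- !gmulA. f_equal.
    rewrite (centralV (zeta_sum_central (eps_vec a))), !gmulA. reflexivity.
  - exists (fun y : prodgrp (Kgrp e psi) (Zsum (Orb psi)) =>
      gmul (proj1_sig (fst y)) (zeta_sum (snd y))).
    split.
    + intro g. simpl. rewrite <- gmulA, gmulVl, gmul1r. reflexivity.
    + intros [k n]. simpl.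
      assert (En : eps_vec (gmul (proj1_sig k) (zeta_sum n)) = n).
      { rewrite eps_vec_hom, eps_vec_zeta_sum, eps_vec_Kgrp. apply gmul1l. }
      unfold As_split. f_equal; [|exact En].
      apply sig_eq. simpl. rewrite En, <- gmulA, gmulVr, gmul1r. reflexivity.
Qed.

Definition commword_part (u : A) : A :=
  proj1_sig (constructive_indefinite_description _ (commword_zeta_sum_decomposition u)).

Lemma commword_part_spec u :
  is_commword (commword_part u) /\ exists n, u = gmul (commword_part u) (zeta_sum n).
Proof.
  unfold commword_part. destruct (constructive_indefinite_description _ _). assumption.
Qed.

Lemma commg_commword_part u v : commg (commword_part u) (commword_part v) = commg u v.
Proof.
  destruct (proj2 (commword_part_spec u)) as [n En],
    (proj2 (commword_part_spec v)) as [m Em].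
  rewrite En at 2. rewrite Em at 2.
  rewrite commg_centralMl, commg_centralMr; [reflexivity | apply zeta_sum_central..].
Qed.

Lemma commword_map_commword_part L :
  commword (map (map_commterm commword_part) L) = commword L.
Proof.
  induction L as [|[c [u v]] L IH]; [reflexivity|]. simpl. rewrite IH.
  unfold commterm, map_commterm; simpl. rewrite commg_commword_part. reflexivity.
Qed.

(* Every element of the kernel is a commutator word of A (its zeta part is forced to be 0),
   and commutators of A are commutators of commutator words, which lie in the kernel. *)
Lemma Kgrp_perfect : perfect (Kgrp e psi).
Proof.
  intro k. destruct (commword_zeta_sum_decomposition (proj1_sig k)) as [b [[L ->] [n Ek]]].
  assert (n0 : n = gone).
  { apply Zsum_eq. intro i. simpl.
    rewrite <- (eps_decomposition i n (ex_intro _ L eq_refl)), <- Ek.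
    apply KsetE, Kgrp_mem. }
  rewrite n0, (hom1 zeta_sum_hom), gmul1r in Ek.
  set (inK := fun u => Kgrp_of (Kset_commword (proj1 (commword_part_spec u)))).
  exists (map (map_commterm inK) L). change (k = commword (map (map_commterm inK) L)).
  apply sig_eq. rewrite (hom_commword _ (@val_hom _ (Kset e psi))), map_map, Ek,
    <- commword_map_commword_part.
  reflexivity.
Qed.

Definition psiK (k : Kgrp e psi) : Inn psi :=
  exist (fun s => is_subgroup (fun s => exists g, psi g = s) -> exists g, psi g = s)
    (psi (proj1_sig k)) (fun _ => ex_intro _ (proj1_sig k) eq_refl).

Lemma psiK_hom : is_hom psiK.
Proof. intros a b. apply sig_eq, psi_hom. Qed.

Lemma psiK_surj y : exists k, psiK k = y.
Proof.
  destruct (commword_zeta_sum_decomposition (Inn_lift y)) as [b [Hb [n En]]].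
  exists (Kgrp_of (Kset_commword Hb)). apply sig_eq. simpl.
  rewrite <- psi_Inn_lift, En, psi_hom, psi_zeta_sum, gmul1r. reflexivity.
Qed.

Lemma psiK_ker_central k : psiK k = gone -> forall g, gmul k g = gmul g k.
Proof.
  intros Hk g. apply sig_eq. simpl. apply ker_psi_central.
  exact (f_equal (fun y : Inn psi => proj1_sig y) Hk).
Qed.

End AdjointGroup.

Theorem proposition3p3 (X : Type) (op : X -> X -> X) (A : grp) (e : X -> A)
    (psi : A -> Sym X) :
  is_quandle op -> is_adjoint op A e -> is_psi op A e psi ->
  (perfect (Inn psi) ->
     isomorphic A (prodgrp (Kgrp e psi) (Zsum (Orb psi))) /\
     perfect (Kgrp e psi) /\
     central_ext (Kgrp e psi) (Inn psi)) /\
  (connected psi -> perfect (Inn psi) -> H2_trivial (Inn psi) ->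
     isomorphic A (prodgrp (Inn psi) Zgrp)).
Proof.
  intros _ A_adj psi_spec.
  pose proof (psiK_hom psi_spec) as psiK_hom.
  pose proof (psiK_ker_central A_adj psi_spec) as psiK_ker.
  split.
  - intro Inn_perfect. split; [|split].
    + exists (As_split A_adj psi_spec Inn_perfect). apply As_split_iso.
    + exact (Kgrp_perfect A_adj psi_spec Inn_perfect).
    + exists (@psiK _ _ e psi). split; [exact psiK_hom | split; [|exact psiK_ker]].
      exact (psiK_surj A_adj psi_spec Inn_perfect).
  - intros connected_X Inn_perfect Inn_H2.
    destruct (connected_Orb_single psi_spec connected_X) as [i0 one_orbit].
    pose proof (psiK_surj A_adj psi_spec Inn_perfect) as psiK_surj.
    assert (psiK_iso : is_iso (@psiK _ _ e psi)).
    { apply (iso_of_trivial_kernel psiK_hom psiK_surj).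
      apply (perfect_central_ext_trivial_kernel psiK_hom psiK_surj psiK_ker);
        [exact (Kgrp_perfect A_adj psi_spec Inn_perfect) | exact Inn_H2]. }
    eexists. exact (iso_comp (As_split_iso A_adj psi_spec Inn_perfect)
      (iso_prod psiK_iso (Zsum_single_iso one_orbit))).
Qed.
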